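(* Let $u$ be the $C^2$ solution of $$ r\left(1+4u'^2+3u'^4\right) - 2u'\left(1+u'^2\right) + 2r\,u''\left(3u'^2-1\right)=0$$ with $u(0)=u'(0)=0$, defined on its maximal interval $[0,r_M)$. Then $u'(r)>0$ for all $r\in(0,r_M)$ (so $u$ is strictly increasing), and $u$ is convex on $[0,r_M)$; equivalently, the curvature of the profile curve $r\mapsto (r,u(r))$ is positive on its maximal domain and its slope $u'$ increases from $0$ towards $1/\sqrt3$.
   Context: The maximal domain of this solution is a bounded interval $[0,r_M)$ with $\lim_{r\to r_M^-}u'(r)=1/\sqrt3$, and $u''(0)=1/4$. *)

From Stdlib Require Import Reals.
Open Scope R_scope.

(* One-sided-safe derivative on the half-open interval [a, b):
   f' is the derivative of f at every x in [a,b), the limit being taken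
   within [a,b) (so at x = a it is the right derivative). *)
Definition deriv_on (a b : R) (f f' : R -> R) : Prop :=
  forall x, a <= x < b ->
    forall eps, 0 < eps -> exists delta, 0 < delta /\
      forall y, a <= y < b -> Rabs (y - x) < delta ->
        Rabs (f y - f x - f' x * (y - x)) <= eps * Rabs (y - x).

Definition cont_on (a b : R) (g : R -> R) : Prop :=
  forall x, a <= x < b ->
    forall eps, 0 < eps -> exists delta, 0 < delta /\
      forall y, a <= y < b -> Rabs (y - x) < delta -> Rabs (g y - g x) < eps.

Definition is_sol (R0 : R) (u u1 u2 : R -> R) : Prop :=
  0 < R0 /\
  deriv_on 0 R0 u u1 /\ deriv_on 0 R0 u1 u2 /\ cont_on 0 R0 u2 /\
  u 0 = 0 /\ u1 0 = 0 /\
  forall r, 0 <= r < R0 ->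
    r * (1 + 4 * (u1 r)^2 + 3 * (u1 r)^4) - 2 * u1 r * (1 + (u1 r)^2)
    + 2 * r * u2 r * (3 * (u1 r)^2 - 1) = 0.

Definition is_maximal_sol (rM : R) (u u1 u2 : R -> R) : Prop :=
  is_sol rM u u1 u2 /\
  ~ (exists R' v v1 v2, rM < R' /\ is_sol R' v v1 v2 /\
       forall r, 0 <= r < rM -> v r = u r).

Definition convex_on (a b : R) (f : R -> R) : Prop :=
  forall x y t, a <= x < b -> a <= y < b -> 0 <= t <= 1 ->
    f (t * x + (1 - t) * y) <= t * f x + (1 - t) * f y.

(* Write the equation as (1 + u'^2) F = 2 r u'' (1 - 3 u'^2) with F r = r (1 + 3 u'^2) - 2 u'.
   Dividing by r and letting r -> 0 gives u''(0) = 1/4, so F > 0 just to the right of 0.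
   F cannot reach 0 again: at a root either u'' = 0 or 3 u'^2 = 1 (and then r = u'), and in
   both cases F' > 0 there, so F would already be negative slightly to the left.  Hence F > 0
   on (0, rM); then 3 u'^2 = 1 is impossible, so by continuity 3 u'^2 < 1 throughout, and the
   factored equation gives u'' > 0.  Monotonicity of u' and convexity of u follow by the mean
   value theorem. *)

From Stdlib Require Import Reals Ranalysis5 Lra Psatz Classical.
Open Scope R_scope.

Lemma Rabs_Rmax_sub_le (a x t : R) : a <= x -> Rabs (Rmax a t - x) <= Rabs (t - x).
Proof.
  intros Hx. destruct (Rle_dec a t) as [Ht|Ht].
  - rewrite Rmax_right by lra. lra.
  - rewrite Rmax_left by lra. rewrite !Rabs_left1; lra.
Qed.

Section HalfOpenInterval.

Variables a b : R.

Lemma deriv_on_cont_on (f f' : R -> R) : deriv_on a b f f' -> cont_on a b f.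
Proof.
  intros Hd x Hx eps Heps.
  destruct (Hd x Hx 1 Rlt_0_1) as [d [Hd0 Hdd]].
  set (K := Rabs (f' x) + 1).
  assert (HK : 0 < K) by (unfold K; pose proof (Rabs_pos (f' x)); lra).
  exists (Rmin d (eps / K)). split.
  { apply Rmin_glb_lt; [lra | apply Rdiv_lt_0_compat; lra]. }
  intros y Hy Hyx.
  pose proof (Rmin_l d (eps / K)). pose proof (Rmin_r d (eps / K)).
  assert (Hlin := Hdd y Hy ltac:(lra)).
  assert (Hslope : Rabs (f y - f x) <= K * Rabs (y - x)).
  { replace (f y - f x) with ((f y - f x - f' x * (y - x)) + f' x * (y - x)) by ring.
    eapply Rle_trans; [apply Rabs_triang|]. rewrite Rabs_mult. unfold K. lra. }
  assert (K * Rabs (y - x) < K * (eps / K)) by (apply Rmult_lt_compat_l; lra).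
  replace (K * (eps / K)) with eps in * by (field; lra). lra.
Qed.

Lemma cont_on_continuity_pt (g : R -> R) (x : R) :
  cont_on a b g -> a <= x < b -> continuity_pt (fun t => g (Rmax a t)) x.
Proof.
  intros Hc Hx eps Heps. destruct (Hc x Hx eps Heps) as [d [Hd H]].
  exists (Rmin d (b - x)). split; [apply Rmin_glb_lt; lra|].
  intros t [_ Ht]. simpl in *. unfold Rdist in *.
  pose proof (Rmin_l d (b - x)). pose proof (Rmin_r d (b - x)).
  pose proof (Rabs_Rmax_sub_le a x t ltac:(lra)).
  rewrite (Rmax_right a x) by lra.
  assert (Hm := Rabs_def2 _ _ (Rle_lt_trans _ _ _ H2 Ht)).
  apply H; [split; [apply Rmax_l | lra] | lra].
Qed.

Lemma cont_on_limit_left (g : R -> R) :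
  a < b -> cont_on a b g -> limit1_in g (fun x => a < x < b) (g a) a.
Proof.
  intros Hab Hc eps Heps. destruct (Hc a (conj (Rle_refl a) Hab) eps Heps) as [d [Hd H]].
  exists d. split; [lra|]. intros x [Hx Hxa]. apply H; [lra | exact Hxa].
Qed.

Lemma deriv_on_quotient_limit_left (f f' : R -> R) :
  a < b -> deriv_on a b f f' ->
  limit1_in (fun x => (f x - f a) / (x - a)) (fun x => a < x < b) (f' a) a.
Proof.
  intros Hab Hd eps Heps.
  destruct (Hd a (conj (Rle_refl a) Hab) (eps / 2) ltac:(lra)) as [d [Hd0 H]].
  exists d. split; [lra|]. intros x [Hx Hxa]. simpl in *. unfold Rdist in *.
  assert (Hq := H x ltac:(lra) Hxa). rewrite (Rabs_right (x - a)) in Hq by lra.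
  replace ((f x - f a) / (x - a) - f' a) with ((f x - f a - f' a * (x - a)) / (x - a))
    by (field; lra).
  unfold Rdiv. rewrite Rabs_mult, Rabs_inv, (Rabs_right (x - a)) by lra.
  apply (Rmult_lt_reg_r (x - a)); [lra|].
  rewrite Rmult_assoc, Rinv_l by lra. nra.
Qed.

Lemma deriv_on_derivable_pt_lim (f f' : R -> R) (x : R) :
  deriv_on a b f f' -> a < x < b -> derivable_pt_lim (fun t => f (Rmax a t)) x (f' x).
Proof.
  intros Hd Hx eps Heps.
  destruct (Hd x ltac:(lra) (eps / 2) ltac:(lra)) as [d [Hd0 H]].
  assert (Hp : 0 < Rmin d (Rmin (x - a) (b - x))) by (repeat apply Rmin_glb_lt; lra).
  exists (mkposreal _ Hp). intros h Hh Hhd. simpl in Hhd.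
  pose proof (Rmin_l d (Rmin (x - a) (b - x))). pose proof (Rmin_r d (Rmin (x - a) (b - x))).
  pose proof (Rmin_l (x - a) (b - x)). pose proof (Rmin_r (x - a) (b - x)).
  pose proof (Rabs_def2 _ _ Hhd).
  rewrite (Rmax_right a (x + h)), (Rmax_right a x) by lra.
  assert (Hq := H (x + h) ltac:(lra) ltac:(replace (x + h - x) with h by ring; lra)).
  replace (x + h - x) with h in Hq by ring.
  replace ((f (x + h) - f x) / h - f' x) with ((f (x + h) - f x - f' x * h) / h)
    by (field; exact Hh).
  assert (0 < Rabs h) by (apply Rabs_pos_lt; exact Hh).
  unfold Rdiv. rewrite Rabs_mult, Rabs_inv.
  apply (Rmult_lt_reg_r (Rabs h)); [lra|].
  rewrite Rmult_assoc, Rinv_l by lra. nra.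
Qed.

Lemma deriv_on_MVT (f f' : R -> R) (x y : R) :
  deriv_on a b f f' -> a <= x < y -> y < b ->
  exists c, x < c < y /\ f y - f x = f' c * (y - x).
Proof.
  intros Hd Hxy Hy.
  set (g := fun t => f (Rmax a t)).
  assert (Hg : forall c, x < c < y -> derivable_pt_lim g c (f' c))
    by (intros c Hc; apply deriv_on_derivable_pt_lim; [exact Hd | lra]).
  assert (pr1 : forall c, x < c < y -> derivable_pt g c)
    by (intros c Hc; exists (f' c); exact (Hg c Hc)).
  assert (pr2 : forall c, x < c < y -> derivable_pt id c)
    by (intros c _; apply derivable_pt_id).
  destruct (MVT g id x y pr1 pr2 ltac:(lra)) as [c [Hc E]].
  - intros c Hc. apply cont_on_continuity_pt; [exact (deriv_on_cont_on f f' Hd) | lra].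
  - intros c _. apply derivable_continuous_pt, derivable_pt_id.
  - exists c. split; [exact Hc|].
    rewrite (derive_pt_eq_0 g c (f' c) (pr1 c Hc) (Hg c Hc)) in E.
    rewrite (derive_pt_eq_0 id c 1 (pr2 c Hc) (derivable_pt_lim_id c)) in E.
    unfold g, id in E. rewrite (Rmax_right a x), (Rmax_right a y) in E by lra. lra.
Qed.

Lemma deriv_on_pos_increasing (f f' : R -> R) (x y : R) :
  deriv_on a b f f' -> (forall c, a < c < b -> 0 < f' c) ->
  a <= x < y -> y < b -> f x < f y.
Proof.
  intros Hd Hpos Hxy Hy. destruct (deriv_on_MVT f f' x y Hd Hxy Hy) as [c [Hc E]].
  assert (0 < f' c) by (apply Hpos; lra). nra.
Qed.

Lemma deriv_on_increasing_convex (f f' : R -> R) :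
  deriv_on a b f f' -> (forall x y, a < x < y -> y < b -> f' x <= f' y) ->
  convex_on a b f.
Proof.
  intros Hd Hmono.
  assert (Hlt : forall x y t, a <= x < y -> y < b -> 0 < t < 1 ->
            f (t * x + (1 - t) * y) <= t * f x + (1 - t) * f y).
  { intros x y t Hxy Hy Ht. set (z := t * x + (1 - t) * y).
    assert (Hz : x < z < y) by (unfold z; split; nra).
    destruct (deriv_on_MVT f f' x z Hd ltac:(lra) ltac:(lra)) as [c1 [Hc1 E1]].
    destruct (deriv_on_MVT f f' z y Hd ltac:(lra) ltac:(lra)) as [c2 [Hc2 E2]].
    assert (f' c1 <= f' c2) by (apply Hmono; lra).
    assert (Hgap : t * f x + (1 - t) * f y - f z = t * (1 - t) * (y - x) * (f' c2 - f' c1)).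
    { replace (t * f x + (1 - t) * f y - f z) with (- t * (f z - f x) + (1 - t) * (f y - f z))
        by ring.
      rewrite E1, E2. unfold z. ring. }
    assert (0 <= t * (1 - t) * (y - x) * (f' c2 - f' c1))
      by (repeat apply Rmult_le_pos; lra).
    lra. }
  intros x y t Hx Hy Ht.
  destruct (Req_dec t 0) as [->|Ht0].
  { replace (0 * x + (1 - 0) * y) with y by ring. lra. }
  destruct (Req_dec t 1) as [->|Ht1].
  { replace (1 * x + (1 - 1) * y) with x by ring. lra. }
  destruct (Rtotal_order x y) as [Hxy|[<-|Hxy]].
  - apply Hlt; lra.
  - replace (t * x + (1 - t) * x) with x by ring. lra.
  - replace (t * x + (1 - t) * y) with ((1 - t) * y + (1 - (1 - t)) * x) by ring.
    replace (t * f x + (1 - t) * f y) with ((1 - t) * f y + (1 - (1 - t)) * f x) by ring.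
    apply Hlt; lra.
Qed.

End HalfOpenInterval.

Lemma continuity_pt_pos_near (g : R -> R) (m : R) :
  continuity_pt g m -> 0 < g m -> exists d, 0 < d /\ forall s, Rabs (s - m) < d -> 0 < g s.
Proof.
  intros Hc Hg. destruct (Hc (g m) Hg) as [d [Hd H]].
  exists d. split; [exact Hd|]. intros s Hs.
  destruct (Req_dec s m) as [->|Hne]; [exact Hg|].
  assert (Hq := H s (conj (conj I (not_eq_sym Hne)) Hs)). simpl in Hq. unfold Rdist in Hq.
  pose proof (Rabs_def2 _ _ Hq). lra.
Qed.

Lemma continuity_pt_nonneg_left (g : R -> R) (c m : R) :
  continuity_pt g m -> c < m -> (forall s, c < s < m -> 0 < g s) -> 0 <= g m.
Proof.
  intros Hc Hcm Hpos. apply Rnot_lt_le. intros Hneg.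
  destruct (continuity_pt_pos_near (fun t => - g t) m (continuity_pt_opp g m Hc)
              ltac:(lra)) as [d [Hd H]].
  set (s := m - Rmin d (m - c) / 2).
  pose proof (Rmin_l d (m - c)). pose proof (Rmin_r d (m - c)).
  assert (0 < Rmin d (m - c)) by (apply Rmin_glb_lt; lra).
  assert (0 < - g s) by (apply H; unfold s; rewrite Rabs_left; lra).
  assert (0 < g s) by (apply Hpos; unfold s; lra).
  lra.
Qed.

Lemma derivable_pt_lim_neg_left (g : R -> R) (c m l : R) :
  derivable_pt_lim g m l -> 0 < l -> g m = 0 -> c < m ->
  exists s, c < s < m /\ g s < 0.
Proof.
  intros Hd Hl Hg Hcm. destruct (Hd (l / 2) ltac:(lra)) as [d Hdd].
  pose proof (cond_pos d).
  set (h := - (Rmin d (m - c) / 2)).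
  pose proof (Rmin_l d (m - c)). pose proof (Rmin_r d (m - c)).
  assert (0 < Rmin d (m - c)) by (apply Rmin_glb_lt; lra).
  assert (Hq := Hdd h ltac:(unfold h; lra) ltac:(unfold h; rewrite Rabs_left; lra)).
  rewrite Hg, Rminus_0_r in Hq. pose proof (Rabs_def2 _ _ Hq).
  exists (m + h). split; [unfold h; lra|].
  assert (Hh : h < 0) by (unfold h; lra).
  replace (g (m + h)) with (g (m + h) / h * h) by (field; lra). nra.
Qed.

Lemma continuous_induction (a b : R) (P : R -> Prop) :
  (exists r0, a < r0 /\ forall s, a < s < r0 -> P s) ->
  (forall m, a < m < b -> (forall s, a < s < m -> P s) ->
     exists d, 0 < d /\ forall s, m <= s < m + d -> P s) ->
  forall s, a < s < b -> P s.
Proof.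
  intros [r0 [Hr0 Hinit]] Hstep.
  set (E := fun r => a < r <= b /\ forall s, a < s < r -> P s).
  destruct (Rlt_le_dec a b) as [Hab|Hba]; [|intros s Hs; lra].
  assert (Hr1 : E (Rmin r0 b)).
  { pose proof (Rmin_l r0 b). pose proof (Rmin_r r0 b).
    split; [split; [apply Rmin_glb_lt|]; lra|]. intros s Hs. apply Hinit. lra. }
  assert (Hbnd : bound E) by (exists b; intros r [Hr _]; lra).
  destruct (completeness E Hbnd (ex_intro _ _ Hr1)) as [m [Hub Hlub]].
  assert (Ham : a < m) by (apply (Rlt_le_trans _ (Rmin r0 b)); [apply Hr1 | apply Hub, Hr1]).
  assert (Hmb : m <= b) by (apply Hlub; intros r [Hr _]; lra).
  assert (Hbelow : forall s, a < s < m -> P s).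
  { intros s Hs. destruct (classic (exists r, E r /\ s < r)) as [[r [[_ Hr] Hsr]]|Hn].
    - apply Hr. lra.
    - exfalso. assert (m <= s); [|lra]. apply Hlub. intros r Hr.
      apply Rnot_lt_le. intros Hsr. apply Hn. exists r. auto. }
  destruct (Rle_lt_or_eq_dec m b Hmb) as [Hlt | ->]; [|exact Hbelow].
  exfalso. destruct (Hstep m (conj Ham Hlt) Hbelow) as [d [Hd Hd']].
  assert (Hext : E (Rmin (m + d) b)).
  { pose proof (Rmin_l (m + d) b). pose proof (Rmin_r (m + d) b).
    split; [split; [apply Rmin_glb_lt|]; lra|]. intros s Hs.
    destruct (Rlt_le_dec s m); [apply Hbelow | apply Hd']; lra. }
  assert (m < Rmin (m + d) b) by (apply Rmin_glb_lt; lra).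
  assert (Rmin (m + d) b <= m) by (apply Hub; exact Hext).
  lra.
Qed.

Section ProfileEquation.

Variables (R0 : R) (u u1 u2 : R -> R).
Hypothesis Hsol : is_sol R0 u u1 u2.

(* [u1] extended constantly to the left of 0, so that the two-sided notions of the standard
   library apply at 0 and at interior points. *)
Definition slope (t : R) : R := u1 (Rmax 0 t).

Definition ode_num (t : R) : R := t * (1 + 3 * slope t ^ 2) - 2 * slope t.

Lemma slope_eq (t : R) : 0 <= t -> slope t = u1 t.
Proof. intros Ht. unfold slope. rewrite Rmax_right by exact Ht. reflexivity. Qed.

Lemma ode_factor (r : R) : 0 <= r < R0 ->
  (1 + u1 r ^ 2) * ode_num r = 2 * r * u2 r * (1 - 3 * u1 r ^ 2).
Proof.
  intros Hr. destruct Hsol as [_ [_ [_ [_ [_ [_ Hode]]]]]].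
  pose proof (Hode r Hr). unfold ode_num. rewrite slope_eq by lra. nra.
Qed.

Lemma u2_at_0 : u2 0 = 1 / 4.
Proof.
  destruct Hsol as [HR [_ [Hdu1 [Hc [_ [Hu10 Hode]]]]]].
  set (D := fun x => 0 < x < R0).
  set (Q := fun x => (u1 x - u1 0) / (x - 0)).
  set (E := fun x => (1 + u1 x * u1 x) * (1 + 3 * (u1 x * u1 x))
                     - 2 * Q x * (1 + u1 x * u1 x) + 2 * u2 x * (3 * (u1 x * u1 x) - 1)).
  assert (Hlim_u1 : limit1_in u1 D 0 0).
  { rewrite <- Hu10 at 1.
    exact (cont_on_limit_left 0 R0 u1 HR (deriv_on_cont_on 0 R0 u1 u2 Hdu1)). }
  assert (Hlim_Q : limit1_in Q D (u2 0) 0)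
    by exact (deriv_on_quotient_limit_left 0 R0 u1 u2 HR Hdu1).
  assert (Hlim_u2 : limit1_in u2 D (u2 0) 0) by exact (cont_on_limit_left 0 R0 u2 HR Hc).
  assert (Hlim : limit1_in E D ((1 + 0 * 0) * (1 + 3 * (0 * 0)) - 2 * u2 0 * (1 + 0 * 0)
                                 + 2 * u2 0 * (3 * (0 * 0) - 1)) 0).
  { unfold E.
    repeat first [ apply limit_plus | apply limit_Ropp | apply limit_mul
                 | apply (limit_free (fun x => x)) | exact Hlim_u1 | exact Hlim_Q
                 | exact Hlim_u2 ]. }
  assert (Hlim0 : limit1_in E D 0 0).
  { intros eps Heps. exists 1. split; [lra|]. intros x [[Hx0 HxR] _]. simpl. unfold Rdist.
    (* [E x] is the equation at [x] divided by [x]. *)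
    assert (E x = 0) as ->.
    { apply (Rmult_eq_reg_r x); [|lra]. rewrite Rmult_0_l, <- (Hode x ltac:(lra)).
      unfold E, Q. rewrite Hu10. field. lra. }
    rewrite Rminus_0_r, Rabs_R0. lra. }
  assert (Hadh : adhDa D 0).
  { intros alp Halp. exists (Rmin alp R0 / 2). unfold D, Rdist.
    pose proof (Rmin_l alp R0). pose proof (Rmin_r alp R0).
    assert (0 < Rmin alp R0) by (apply Rmin_glb_lt; lra).
    rewrite Rminus_0_r, Rabs_right by lra. lra. }
  pose proof (single_limit E D _ _ 0 Hadh Hlim Hlim0). lra.
Qed.

Lemma ode_num_derivable (m : R) : 0 < m < R0 ->
  derivable_pt_lim ode_num m (1 + 3 * u1 m ^ 2 + 2 * u2 m * (3 * m * u1 m - 1)).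
Proof.
  intros Hm. destruct Hsol as [_ [_ [Hdu1 _]]].
  assert (Hp : derivable_pt_lim slope m (u2 m))
    by exact (deriv_on_derivable_pt_lim 0 R0 u1 u2 m Hdu1 Hm).
  assert (H := derivable_pt_lim_minus _ _ _ _ _
    (derivable_pt_lim_mult id (fun t => 1 + 3 * slope t ^ 2) _ _ _ (derivable_pt_lim_id m)
      (derivable_pt_lim_plus (fct_cte 1) (fun t => 3 * slope t ^ 2) _ _ _
        (derivable_pt_lim_const 1 m)
        (derivable_pt_lim_scal (fun t => slope t ^ 2) 3 _ _
          (derivable_pt_lim_comp slope (fun x => x ^ 2) _ _ _ Hp
            (derivable_pt_lim_pow (slope m) 2)))))
    (derivable_pt_lim_scal slope 2 _ _ Hp)).
  rewrite <- (slope_eq m) by lra.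
  replace (1 + 3 * slope m ^ 2 + 2 * u2 m * (3 * m * slope m - 1))
    with (1 * (1 + 3 * slope m ^ 2) + id m * (0 + 3 * (INR 2 * slope m ^ Nat.pred 2 * u2 m))
          - 2 * u2 m) by (unfold id; simpl; ring).
  exact H.
Qed.

Lemma ode_num_root_deriv_pos (m : R) : 0 < m < R0 -> ode_num m = 0 ->
  0 < 1 + 3 * u1 m ^ 2 + 2 * u2 m * (3 * m * u1 m - 1).
Proof.
  intros Hm Hroot. pose proof (ode_factor m ltac:(lra)) as Hfac.
  rewrite Hroot, Rmult_0_r in Hfac.
  unfold ode_num in Hroot. rewrite slope_eq in Hroot by lra.
  destruct (Rmult_integral _ _ (eq_sym Hfac)) as [Hu2 | Hsq].
  - assert (u2 m = 0) as -> by (destruct (Rmult_integral _ _ Hu2); lra). nra.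
  - assert (Hm1 : m = u1 m) by nra. rewrite <- Hm1. nra.
Qed.

Lemma ode_num_pos_near_0 : exists r0, 0 < r0 /\ forall s, 0 < s < r0 -> 0 < ode_num s.
Proof.
  destruct Hsol as [HR [_ [Hdu1 [_ [_ [Hu10 _]]]]]].
  destruct (Hdu1 0 ltac:(lra) (1 / 8) ltac:(lra)) as [d [Hd H]].
  rewrite Hu10, u2_at_0 in H.
  exists (Rmin d R0). split; [apply Rmin_glb_lt; lra|]. intros s Hs.
  pose proof (Rmin_l d R0). pose proof (Rmin_r d R0).
  assert (Hq := H s ltac:(lra) ltac:(rewrite Rminus_0_r, Rabs_right; lra)).
  rewrite !Rminus_0_r, (Rabs_right s) in Hq by lra.
  pose proof (Rabs_def2 _ _ (Rle_lt_trans _ _ (s / 4) Hq ltac:(lra))).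
  unfold ode_num. rewrite slope_eq by lra.
  assert (0 <= s * (3 * u1 s ^ 2)) by (apply Rmult_le_pos; nra). nra.
Qed.

Lemma ode_num_pos (s : R) : 0 < s < R0 -> 0 < ode_num s.
Proof.
  revert s. apply (continuous_induction 0 R0 (fun s => 0 < ode_num s));
    [exact ode_num_pos_near_0|].
  intros m Hm Hbelow.
  assert (Hd := ode_num_derivable m Hm).
  assert (Hcont : continuity_pt ode_num m)
    by exact (derivable_continuous_pt _ _ (exist _ _ Hd)).
  assert (Hnonneg : 0 <= ode_num m)
    by exact (continuity_pt_nonneg_left ode_num 0 m Hcont ltac:(lra) Hbelow).
  assert (Hpos : 0 < ode_num m).
  { destruct Hnonneg as [Hlt | Hroot]; [exact Hlt|]. exfalso.
    destruct (derivable_pt_lim_neg_left ode_num 0 m _ Hd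
                (ode_num_root_deriv_pos m Hm (eq_sym Hroot)) (eq_sym Hroot) ltac:(lra))
      as [t [Ht Hneg]].
    pose proof (Hbelow t Ht). lra. }
  destruct (continuity_pt_pos_near ode_num m Hcont Hpos) as [d [Hd0 Hnear]].
  exists d. split; [exact Hd0|]. intros t Ht. apply Hnear. rewrite Rabs_right; lra.
Qed.

Lemma slope_sq_lt_third (r : R) : 0 <= r < R0 -> 3 * u1 r ^ 2 < 1.
Proof.
  intros Hr. destruct Hsol as [HR [_ [Hdu1 [_ [_ [Hu10 _]]]]]].
  destruct (Req_dec r 0) as [-> | Hr0]; [rewrite Hu10; lra|].
  set (g := fun t => 3 * (slope t * slope t) - 1).
  assert (Hg0 : g 0 < 0) by (unfold g, slope; rewrite Rmax_left, Hu10 by lra; lra).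
  assert (Hcont : forall t, 0 <= t <= r -> continuity_pt g t).
  { intros t Ht.
    assert (Hs : continuity_pt slope t)
      by exact (cont_on_continuity_pt 0 R0 u1 t (deriv_on_cont_on 0 R0 u1 u2 Hdu1) ltac:(lra)).
    exact (continuity_pt_minus _ (fct_cte 1) t
             (continuity_pt_scal _ 3 t (continuity_pt_mult slope slope t Hs Hs))
             (continuity_pt_const (fct_cte 1) t (fun _ _ => eq_refl))). }
  apply Rnot_le_lt. intros Hge.
  assert (Hgr : 0 <= g r) by (unfold g; rewrite slope_eq by lra; lra).
  assert (Hroot : exists z, 0 < z <= r /\ g z = 0).
  { destruct Hgr as [Hgt | Heq].
    - destruct (IVT_interv g 0 r Hcont ltac:(lra) Hg0 Hgt) as [z [Hz Hgz]].
      exists z. split; [destruct (Req_dec z 0) as [-> | ]; lra | exact Hgz].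
    - exists r. split; [lra | auto]. }
  destruct Hroot as [z [Hz Hgz]]. unfold g in Hgz. rewrite slope_eq in Hgz by lra.
  pose proof (ode_num_pos z ltac:(lra)) as Hpos. pose proof (ode_factor z ltac:(lra)) as Hfac.
  replace (1 - 3 * u1 z ^ 2) with 0 in Hfac by lra. rewrite Rmult_0_r in Hfac.
  assert (0 < (1 + u1 z ^ 2) * ode_num z) by (apply Rmult_lt_0_compat; nra).
  lra.
Qed.

Lemma u2_pos (r : R) : 0 <= r < R0 -> 0 < u2 r.
Proof.
  intros Hr. destruct (Req_dec r 0) as [-> | Hr0]; [rewrite u2_at_0; lra|].
  pose proof (ode_num_pos r ltac:(lra)). pose proof (ode_factor r Hr) as Hfac.
  pose proof (slope_sq_lt_third r Hr).
  assert (0 < (1 + u1 r ^ 2) * ode_num r) by (apply Rmult_lt_0_compat; nra).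
  assert (Hc : 0 < 2 * r * (1 - 3 * u1 r ^ 2)) by (apply Rmult_lt_0_compat; lra).
  apply Rnot_le_lt. intros Hneg.
  assert (2 * r * (1 - 3 * u1 r ^ 2) * u2 r <= 0) by nra.
  lra.
Qed.

End ProfileEquation.

Theorem mainTheorem3 (rM : R) (u u1 u2 : R -> R) :
  is_maximal_sol rM u u1 u2 ->
  (forall r, 0 < r < rM -> 0 < u1 r) /\
  convex_on 0 rM u /\
  (forall r, 0 <= r < rM -> 0 < u2 r) /\
  (forall r s, 0 <= r < s -> s < rM -> u1 r < u1 s).
Proof.
  intros [Hsol _].
  pose proof Hsol as [_ [Hdu [Hdu1 [_ [_ [Hu10 _]]]]]].
  assert (Hu2 := u2_pos rM u u1 u2 Hsol).
  assert (Hinc : forall r s, 0 <= r < s -> s < rM -> u1 r < u1 s).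
  { intros r s Hrs Hs.
    apply (deriv_on_pos_increasing 0 rM u1 u2); auto.
    intros c Hc. apply Hu2. lra. }
  split; [intros r Hr; rewrite <- Hu10; apply Hinc; lra|].
  split.
  - apply (deriv_on_increasing_convex 0 rM u u1 Hdu).
    intros x y Hxy Hy. left. apply Hinc; lra.
  - split; [exact Hu2 | exact Hinc].
Qed.
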